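(* Let $\boldsymbol\beta$ be ERGM parameters, $m_n\to\infty$ with $\binom{m_n}{2}=o(\log n)$, and let $\mathcal{G}_{n,1},\dots,\mathcal{G}_{n,n}$ be i.i.d. from $\mathbb{P}_{\boldsymbol\beta}$ on $m_n$ vertices. For a graph $G$ on $m_n$ vertices let $p_{\boldsymbol\beta}(G)=\mathbb{P}_{\boldsymbol\beta}(G)$ and $X_{i,G}=\mathbf{1}(\mathcal{G}_{n,i}=G)/p_{\boldsymbol\beta}(G)$. Then for every $\epsilon>0$, \[\mathbb{P}\Big(\sup_{G}\Big|\frac1n\sum_{i=1}^nX_{i,G}-1\Big|>\frac{\epsilon}{m_n}\Big)\to0,\] the supremum being over all simple graphs $G$ on vertex set $\{1,\dots,m_n\}$.
   Context: ERGM: $\mathbb{P}_{\boldsymbol\beta}(G)=Z_N(\boldsymbol\beta)^{-1}\exp\{N^2\sum_{k=1}^K\beta_kt(T_k,G)\}$ on simple graphs with vertex set $\{1,\dots,N\}$, where $T_1$ is a single edge, $T_2,\dots,T_K$ are fixed graphs with at least two edges, $\boldsymbol\beta\in\mathbb{R}^K$, and $t(T,G)=\mathrm{hom}(T,G)/N^{v(T)}$ with $\mathrm{hom}$ counting edge-preserving maps $V(T)\to V(G)$. *)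

From HB Require Import structures.
From mathcomp Require Import all_boot all_order all_algebra.
From mathcomp Require Import all_classical all_reals all_analysis.
Set Implicit Arguments. Unset Strict Implicit. Unset Printing Implicit Defensive.
Import Order.TTheory GRing.Theory Num.Theory.
Local Open Scope ring_scope.

Definition sgraph (N : nat) :=
  {E : {set {set 'I_N}} | [forall e in E, #|e| == 2%N]}.
HB.instance Definition _ N := Finite.copy (sgraph N)
  {E : {set {set 'I_N}} | [forall e in E, #|e| == 2%N]}.

Definition edges N (G : sgraph N) : {set {set 'I_N}} := val G.

(* adjacency: {u,v} is an edge (automatically u != v) *)
Definition adj N (G : sgraph N) (u v : 'I_N) : bool := [set u; v] \in edges G.

Definition hom k N (T : sgraph k) (G : sgraph N) : nat :=
  #|[set f : {ffun 'I_k -> 'I_N} |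
      [forall a, forall b, adj T a b ==> adj G (f a) (f b)]]|.

Definition tdens (R : realType) k N (T : sgraph k) (G : sgraph N) : R :=
  (hom T G)%:R / (N%:R ^+ k).

Definition ergmH (R : realType) (K : nat) (v : 'I_K -> nat)
  (T : forall k : 'I_K, sgraph (v k)) (beta : 'I_K -> R) N (G : sgraph N) : R :=
  N%:R ^+ 2 * \sum_(k < K) beta k * tdens R (T k) G.

Definition ergmZ (R : realType) (K : nat) (v : 'I_K -> nat)
  (T : forall k : 'I_K, sgraph (v k)) (beta : 'I_K -> R) N : R :=
  \sum_(G : sgraph N) expR (ergmH T beta G).

Definition ergmP (R : realType) (K : nat) (v : 'I_K -> nat)
  (T : forall k : 'I_K, sgraph (v k)) (beta : 'I_K -> R) N (G : sgraph N) : R :=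
  expR (ergmH T beta G) / ergmZ T beta N.

Definition iidProb (R : realType) (S : finType) (p : S -> R) (n : nat)
  (A : pred {ffun 'I_n -> S}) : R :=
  \sum_(s : {ffun 'I_n -> S} | A s) \prod_(i < n) p (s i).

From Pilot Require Import Defs.
From HB Require Import structures.
From mathcomp Require Import all_boot all_order all_algebra.
From mathcomp Require Import all_classical all_reals all_analysis.
From mathcomp Require Import ring lra zify.
Set Implicit Arguments.
Unset Strict Implicit.
Unset Printing Implicit Defensive.
Import Order.TTheory GRing.Theory Num.Theory.
Local Open Scope classical_set_scope.
Local Open Scope ring_scope.

(* Chebyshev's inequality for the empirical frequency of a fixed graph G gives
   P(|freq/p(G) - 1| > eps/m) <= m^2 / (n eps^2 p(G)), and a union bound over
   the at most 2^C(m,2) graphs costs another such factor.  Since the Hamiltonian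
   is bounded by m^2 (sum_k |beta_k|), 1/p(G) <= exp(O(C(m,2))), so the total
   bound is exp(O(C(m,2)))/n, which tends to 0 when C(m,2) = o(log n). *)

Section IidProduct.
Variables (R : realType) (S : finType).

Lemma prod_if_eq (n : nat) (i : 'I_n) (g : 'I_n -> R) :
  \prod_k (if k == i then g k else 1) = g i.
Proof. by rewrite -big_mkcond big_pred1_eq. Qed.

(* Expand the square and use independence: the cross terms i != j vanish
   because each has a factor E[a] = 0. *)
Lemma iid_second_moment (p a : S -> R) (n : nat) :
  \sum_x p x = 1 -> \sum_x p x * a x = 0 ->
  \sum_(s : {ffun 'I_n -> S}) (\prod_i p (s i)) * (\sum_i a (s i)) ^+ 2
  = n%:R * \sum_x p x * a x ^+ 2.
Proof.
move=> p1 pa0; pose f (i j k : 'I_n) x :=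
  p x * (if k == i then a x else 1) * (if k == j then a x else 1).
have expand (s : {ffun 'I_n -> S}) :
    (\prod_i p (s i)) * (\sum_i a (s i)) ^+ 2 =
    \sum_i \sum_j \prod_k f i j k (s k).
  rewrite expr2 mulr_suml mulr_sumr; apply: eq_bigr => i _.
  rewrite !mulr_sumr; apply: eq_bigr => j _.
  by rewrite !big_split /= !prod_if_eq mulrA.
rewrite (eq_bigr _ (fun s _ => expand s)) exchange_big /=.
under eq_bigr => i _ do rewrite exchange_big /=.
rewrite -[in RHS](card_ord n) -sumr_const mulr_suml.
apply: eq_bigr => i _; rewrite mul1r.
rewrite (bigD1 i) //= [X in _ + X]big1 ?addr0 => [|j ji].
  rewrite -(bigA_distr_bigA (f i i)) (bigD1 i) //= [X in _ * X]big1 ?mulr1.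
    by apply: eq_bigr => x _; rewrite /f eqxx expr2 mulrA.
  move=> k /negbTE ki; rewrite -[RHS]p1.
  by apply: eq_bigr => x _; rewrite /f ki !mulr1.
rewrite -(bigA_distr_bigA (f i j)) (bigD1 i) //=.
have -> : \sum_x f i j i x = 0.
  rewrite -[RHS]pa0; apply: eq_bigr => x _.
  by rewrite /f eqxx eq_sym (negbTE ji) mulr1.
by rewrite mul0r.
Qed.

Variable p : S -> R.
Hypothesis p_ge0 : forall x, 0 <= p x.

Lemma iidProb_ge0 (n : nat) (A : pred {ffun 'I_n -> S}) : 0 <= iidProb p A.
Proof. by apply: sumr_ge0 => s _; apply: prodr_ge0. Qed.

Lemma iidProb_exists_le (I : finType) (n : nat) (A : I -> pred {ffun 'I_n -> S}) :
  iidProb p (fun s => [exists G, A G s]) <= \sum_G iidProb p (A G).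
Proof.
rewrite /iidProb.
rewrite (eq_bigr (fun G => \sum_s (if A G s then \prod_i p (s i) else 0)));
  last by move=> G _; rewrite big_mkcond.
rewrite exchange_big /= big_mkcond /=; apply: ler_sum => s _.
have w0 : 0 <= \prod_i p (s i) by apply: prodr_ge0.
case: existsP => [[G AGs]|_]; last by apply: sumr_ge0 => G _; case: ifP.
by rewrite (bigD1 G) //= AGs lerDl; apply: sumr_ge0 => H _; case: ifP.
Qed.

Hypothesis p_sum1 : \sum_x p x = 1.

Lemma iidProb_Chebyshev (a : S -> R) (n : nat) (d : R) :
  \sum_x p x * a x = 0 -> 0 < d -> (0 < n)%N ->
  iidProb p (fun s : {ffun 'I_n -> S} => d < `|n%:R^-1 * \sum_i a (s i)|)
  <= (\sum_x p x * a x ^+ 2) / (n%:R * d ^+ 2).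
Proof.
move=> pa0 d0 n0; have nR : 0 < (n%:R : R) by rewrite ltr0n.
pose Y (s : {ffun 'I_n -> S}) := n%:R^-1 * \sum_i a (s i).
rewrite /iidProb; apply: (@le_trans _ _
  (\sum_(s : {ffun 'I_n -> S}) (\prod_i p (s i)) * (Y s ^+ 2 / d ^+ 2))).
  rewrite [X in _ <= X](bigID (fun s => d < `|Y s|)) /= -[X in X <= _]addr0.
  apply: lerD; last first.
    by apply: sumr_ge0 => s _; rewrite mulr_ge0 ?divr_ge0 ?sqr_ge0 ?prodr_ge0.
  apply: ler_sum => s dY; rewrite -[X in X <= _]mulr1.
  apply: ler_wpM2l; first exact: prodr_ge0.
  rewrite ler_pdivlMr ?exprn_gt0 // mul1r -(real_normK (num_real (Y s))).
  by rewrite lerXn2r ?nnegrE ?normr_ge0 ?ltW.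
suff -> : \sum_(s : {ffun 'I_n -> S}) (\prod_i p (s i)) * (Y s ^+ 2 / d ^+ 2) =
    (\sum_x p x * a x ^+ 2) / (n%:R * d ^+ 2) by [].
transitivity ((n%:R^-1 ^+ 2 / d ^+ 2) *
    \sum_(s : {ffun 'I_n -> S}) (\prod_i p (s i)) * (\sum_i a (s i)) ^+ 2).
  by rewrite mulr_sumr; apply: eq_bigr => s _; rewrite /Y exprMn; ring.
by rewrite iid_second_moment //; field; rewrite !gt_eqF ?exprn_gt0.
Qed.

(* The centred variable is a x = 1(x = G)/p(G) - 1, whose variance is
   1/p(G) - 1 <= 1/p(G). *)
Lemma iidProb_freq_dev_le (G : S) (n : nat) (d : R) :
  0 < p G -> 0 < d -> (0 < n)%N ->
  iidProb p (fun s : {ffun 'I_n -> S} =>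
    d < `|n%:R^-1 * \sum_i ((s i == G)%:R / p G) - 1|)
  <= (n%:R * d ^+ 2 * p G)^-1.
Proof.
move=> pG d0 n0; have nR : 0 < (n%:R : R) by rewrite ltr0n.
pose a x := (x == G)%:R / p G - 1.
have sum_split (h : S -> R) :
    \sum_x p x * h x = p G * h G + \sum_(x | x != G) p x * h x.
  by rewrite (bigD1 G).
have p_out : \sum_(x | x != G) p x = 1 - p G.
  by apply/eqP; rewrite eq_sym subr_eq -p_sum1 (bigD1 G) //= addrC.
have mean0 : \sum_x p x * a x = 0.
  rewrite sum_split (eq_bigr (fun x => - p x)) => [|x /negbTE xG]; last first.
    by rewrite /a xG mul0r sub0r mulrN1.
  by rewrite sumrN p_out /a eqxx mul1r; field; rewrite gt_eqF.
have var : \sum_x p x * a x ^+ 2 = (p G)^-1 - 1.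
  rewrite sum_split (eq_bigr p) => [|x /negbTE xG]; last first.
    by rewrite /a xG mul0r sub0r sqrrN expr1n mulr1.
  by rewrite p_out /a eqxx mul1r; field; rewrite gt_eqF.
have centre (s : {ffun 'I_n -> S}) :
    n%:R^-1 * \sum_i ((s i == G)%:R / p G) - 1 = n%:R^-1 * \sum_i a (s i).
  by rewrite /a sumrB sumr_const card_ord mulrBr -mulr_natl mulr1 mulVf ?gt_eqF.
rewrite (_ : iidProb p _ = iidProb p
    (fun s : {ffun 'I_n -> S} => d < `|n%:R^-1 * \sum_i a (s i)|)); last first.
  by apply: eq_bigl => s; rewrite centre.
apply: le_trans (@iidProb_Chebyshev a n d mean0 d0 n0) _.
rewrite var [X in _ <= X]invfM [X in _ <= X]mulrC.
by apply: ler_wpM2r; [rewrite invr_ge0 mulr_ge0 ?ler0n ?sqr_ge0 | rewrite gerBl].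
Qed.

End IidProduct.

Lemma card_sgraph (N : nat) : (#|{: sgraph N}| <= 2 ^ 'C(N, 2))%N.
Proof.
rewrite card_sig -[N in 'C(N, _)]card_ord -card_draws -card_powerset.
apply: subset_leq_card; apply/fintype.subsetP => E; rewrite inE /= powersetE.
move=> /forallP E2; apply/fintype.subsetP => e eE; rewrite inE.
exact: (implyP (E2 e) eE).
Qed.

Lemma card_sgraph_le_expR (R : realType) (N : nat) :
  (#|{: sgraph N}|%:R : R) <= expR 'C(N, 2)%:R.
Proof.
apply: (@le_trans _ _ (2%:R ^+ 'C(N, 2))).
  by rewrite -natrX ler_nat card_sgraph.
rewrite -[X in expR X]mulr1 expRM_natl lerXn2r ?nnegrE ?ler0n ?expR_ge0 //.
exact: (le_trans _ (expR_ge1Dx 1)).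
Qed.

Lemma sqrn_le_4bin2 (N : nat) : (1 < N)%N -> (N * N <= 4 * 'C(N, 2))%N.
Proof. by case: N => [|N] //; rewrite bin2 -divn2 /=; nia. Qed.

Section ErgmBounds.
Variables (R : realType) (K : nat) (v : 'I_K -> nat)
  (T : forall k : 'I_K, sgraph (v k)) (beta : 'I_K -> R).

Definition beta_l1 : R := \sum_k `|beta k|.

Lemma beta_l1_ge0 : 0 <= beta_l1.
Proof. by apply: sumr_ge0 => k _; exact: normr_ge0. Qed.

Lemma tdens_ge0 {k N : nat} (F : sgraph k) (G : sgraph N) : 0 <= tdens R F G.
Proof. by rewrite /tdens divr_ge0 ?exprn_ge0 ?ler0n. Qed.

Lemma tdens_le1 {k N : nat} (F : sgraph k) (G : sgraph N) : tdens R F G <= 1.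
Proof.
have hom_le : (Defs.hom F G <= N ^ k)%N.
  by apply: leq_trans (max_card _) _; rewrite card_ffun !card_ord.
rewrite /tdens; have [->|Nk0] := eqVneq (N%:R ^+ k : R) 0.
  by rewrite invr0 mulr0.
have Nk_gt0 : 0 < (N%:R ^+ k : R) by rewrite lt0r Nk0 exprn_ge0 ?ler0n.
by rewrite ler_pdivrMr // mul1r -natrX ler_nat.
Qed.

Lemma normr_ergmH_le {N : nat} (G : sgraph N) :
  `|ergmH T beta G| <= N%:R ^+ 2 * beta_l1.
Proof.
rewrite /ergmH normrM ger0_norm ?exprn_ge0 ?ler0n //.
rewrite ler_wpM2l ?exprn_ge0 ?ler0n //.
apply: le_trans (ler_norm_sum _ _ _) _; apply: ler_sum => k _.
rewrite normrM (ger0_norm (tdens_ge0 (T k) G)) -[X in _ <= X]mulr1.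
by rewrite ler_wpM2l ?normr_ge0 ?tdens_le1.
Qed.

Lemma ergmZ_gt0 {N : nat} (G : sgraph N) : 0 < ergmZ T beta N.
Proof.
rewrite /ergmZ (bigD1 G) //= ltr_pwDl ?expR_gt0 //.
by apply: sumr_ge0 => H _; exact: expR_ge0.
Qed.

Lemma ergmP_gt0 {N : nat} (G : sgraph N) : 0 < ergmP T beta G.
Proof. by rewrite /ergmP divr_gt0 ?expR_gt0 ?(ergmZ_gt0 G). Qed.

Lemma ergmP_ge0 {N : nat} (G : sgraph N) : 0 <= ergmP T beta G.
Proof. exact/ltW/ergmP_gt0. Qed.

Lemma sum_ergmP {N : nat} (G0 : sgraph N) :
  \sum_(G : sgraph N) ergmP T beta G = 1.
Proof. by rewrite /ergmP -mulr_suml divff ?gt_eqF ?(ergmZ_gt0 G0). Qed.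

(* Z <= #graphs * exp(m^2 |beta|) and exp(H(G)) >= exp(-m^2 |beta|). *)
Lemma invr_ergmP_le {N : nat} (G : sgraph N) :
  (ergmP T beta G)^-1 <= #|{: sgraph N}|%:R * expR (2 * (N%:R ^+ 2 * beta_l1)).
Proof.
set b := N%:R ^+ 2 * beta_l1.
have Z_le : ergmZ T beta N <= #|{: sgraph N}|%:R * expR b.
  rewrite mulr_natl -sumr_const /ergmZ; apply: ler_sum => H _.
  by rewrite ler_expR (le_trans (ler_norm _) (normr_ergmH_le H)).
rewrite /ergmP invf_div -expRN (_ : 2 * b = b + b); last by ring.
rewrite expRD mulrA; apply: ler_pM => //; first exact/ltW/ergmZ_gt0.
by rewrite ler_expR (le_trans _ (normr_ergmH_le G)) // -normrN ler_norm.
Qed.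

Lemma invr_ergmP_le_expR {N : nat} (G : sgraph N) : (1 < N)%N ->
  (ergmP T beta G)^-1 <= expR ((1 + 8 * beta_l1) * 'C(N, 2)%:R).
Proof.
move=> N1; apply: le_trans (invr_ergmP_le G) _.
rewrite (mulrDl 1 (8 * beta_l1)) mul1r expRD.
apply: ler_pM; rewrite ?ler0n ?expR_ge0 ?card_sgraph_le_expR //.
rewrite ler_expR; have : (N%:R : R) ^+ 2 <= 4 * 'C(N, 2)%:R.
  by rewrite expr2 -natrM -natrM ler_nat sqrn_le_4bin2.
by have := beta_l1_ge0; nra.
Qed.

Lemma iidProb_ergm_dev_le (n N : nat) (eps : R) :
  0 < eps -> (1 < N)%N -> (0 < n)%N ->
  iidProb (ergmP T beta (N := N)) (fun s : {ffun 'I_n -> sgraph N} =>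
    [exists G : sgraph N,
       eps / N%:R < `|n%:R^-1 * \sum_i ((s i == G)%:R / ergmP T beta G) - 1|])
  <= expR ((6 + 8 * beta_l1) * 'C(N, 2)%:R) / (n%:R * eps ^+ 2).
Proof.
move=> eps0 N1 n0; have NR : 0 < (N%:R : R) by rewrite ltr0n ltnW.
have nR : 0 < (n%:R : R) by rewrite ltr0n.
have G0 : sgraph N.
  by exists finset.set0; apply/forallP => e; rewrite finset.in_set0.
apply: le_trans (iidProb_exists_le (@ergmP_ge0 N) _) _.
apply: (@le_trans _ _ (\sum_(G : sgraph N) N%:R ^+ 2 / (n%:R * eps ^+ 2) *
    expR ((1 + 8 * beta_l1) * 'C(N, 2)%:R))).
  apply: ler_sum => G _.
  apply: le_trans (iidProb_freq_dev_le (@ergmP_ge0 N) (sum_ergmP G0)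
    (ergmP_gt0 G) (divr_gt0 eps0 NR) n0) _.
  rewrite [X in X <= _]
    (_ : _ = N%:R ^+ 2 / (n%:R * eps ^+ 2) * (ergmP T beta G)^-1).
    apply: ler_wpM2l; last exact: invr_ergmP_le_expR.
    by rewrite divr_ge0 ?mulr_ge0 ?exprn_ge0 ?ler0n ?(ltW eps0).
  by field; rewrite (gt_eqF (ergmP_gt0 G)) (gt_eqF eps0) (gt_eqF nR) (gt_eqF NR).
set E := expR ((1 + 8 * beta_l1) * 'C(N, 2)%:R).
rewrite sumr_const -[X in X <= _]mulr_natl.
rewrite [X in X <= _]
  (_ : _ = #|{: sgraph N}|%:R * N%:R ^+ 2 * E / (n%:R * eps ^+ 2));
  last by rewrite mulrA; ring.
rewrite ler_pM2r ?invr_gt0 ?mulr_gt0 ?exprn_gt0 //.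
have sq_le : (N%:R : R) ^+ 2 <= expR (4 * 'C(N, 2)%:R).
  apply: le_trans (expR_ge1Dx _); rewrite expr2 -natrM -natrM ler_wpDl //.
  by rewrite ler_nat sqrn_le_4bin2.
rewrite (_ : (6 + 8 * beta_l1) * _ = 'C(N, 2)%:R + 4 * 'C(N, 2)%:R +
  (1 + 8 * beta_l1) * 'C(N, 2)%:R); last by ring.
rewrite !expRD; apply: ler_pM; rewrite ?expR_ge0 ?mulr_ge0 ?exprn_ge0 ?ler0n //.
by apply: ler_pM; rewrite ?exprn_ge0 ?ler0n ?card_sgraph_le_expR.
Qed.

End ErgmBounds.

(* Eventually 2 c x_n <= ln n, so exp(c x_n)^2 <= n <= (e n)^2 once n >= e^-2. *)
Lemma cvg_expR_o_ln_div (R : realType) (x : nat -> R) (c : R) : 0 < c ->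
  (fun n => x n / ln (n%:R : R)) @ \oo --> 0 ->
  (fun n => expR (c * x n) / n%:R) @ \oo --> 0.
Proof.
move=> c0 x_o_ln; apply/cvgrPdist_le => e e0.
have c2 : 0 < (2 * c)^-1 by rewrite invr_gt0 mulr_gt0.
have /cvgrPdist_le/(_ _ c2) x_small := x_o_ln.
near=> n.
have n2 : (2 <= n)%N by near: n; exact: nbhs_infty_ge.
have n_big : (e ^+ 2)^-1 <= n%:R by near: n; exact: nbhs_infty_ger.
have xn : `|0 - x n / ln (n%:R : R)| <= (2 * c)^-1 by near: n; exact: x_small.
have nR : 1 < (n%:R : R) by rewrite ltr1n.
have ln0 : 0 < ln (n%:R : R) by apply: ln_gt0.
have x_le : 2 * c * x n <= ln (n%:R : R).
  move: xn; rewrite sub0r normrN => /(le_trans (ler_norm _)).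
  by rewrite ler_pdivrMr // -ler_pdivlMl ?mulr_gt0.
have en_ge1 : 1 <= e ^+ 2 * n%:R by rewrite -ler_pdivrMl ?exprn_gt0 // mulr1.
have sq_le : expR (c * x n) ^+ 2 <= (e * n%:R) ^+ 2.
  apply: (@le_trans _ _ n%:R).
    rewrite -expRM_natl -[X in _ <= X]lnK ?posrE ?(lt_trans ltr01) // ler_expR.
    by rewrite mulrA.
  rewrite exprMn expr2 mulrA -[X in X <= _]mul1r.
  by rewrite ler_wpM2r ?ler0n.
rewrite sub0r normrN ger0_norm ?divr_ge0 ?expR_ge0 ?ler0n //.
rewrite ler_pdivrMr ?(lt_trans ltr01) //.
by rewrite -(@ler_pXn2r _ 2) ?nnegrE ?expR_ge0 ?mulr_ge0 ?ler0n ?(ltW e0).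
Unshelve. all: end_near.
Qed.

Theorem mainTheorem16 (R : realType) (K : nat) (v : 'I_K.+1 -> nat)
  (T : forall k : 'I_K.+1, sgraph (v k)) (beta : 'I_K.+1 -> R)
  (m : nat -> nat) :
  (* T_1 (index ord0) is a single edge *)
  v ord0 = 2%N -> #|edges (T ord0)| = 1%N ->
  (* T_2, ..., T_K have at least two edges *)
  (forall k : 'I_K.+1, k != ord0 -> (2 <= #|edges (T k)|)%N) ->
  (* m_n -> oo *)
  (forall M : nat, \forall n \near \oo, (M <= m n)%N) ->
  (* binom(m_n, 2) = o(log n) *)
  ((fun n : nat => (('C(m n, 2))%:R / ln (n%:R : R) : R)) @ \oo --> 0) ->
  forall eps : R, 0 < eps ->
  ((fun n : nat =>
     (iidProb (ergmP T beta (N := m n)) (n := n)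
       (fun s : {ffun 'I_n -> sgraph (m n)} =>
          [exists G : sgraph (m n),
             eps / (m n)%:R <
             `| n%:R^-1 * \sum_(i < n) ((s i == G)%:R / ergmP T beta G) - 1 |])
      : R)) @ \oo --> 0).
Proof.
move=> _ _ _ m_oo C_o_ln eps eps0.
set c := 6 + 8 * beta_l1 beta.
have c0 : 0 < c by rewrite /c; have := beta_l1_ge0 beta; lra.
have bound_cvg :
    (fun n => expR (c * 'C(m n, 2)%:R) / n%:R / eps ^+ 2) @ \oo --> 0.
  by rewrite -(mul0r (eps ^+ 2)^-1); exact: cvgMl (cvg_expR_o_ln_div c0 C_o_ln).
apply/cvgrPdist_le => e e0; have /cvgrPdist_le/(_ e e0) bound_small := bound_cvg.
near=> n.
have m1 : (1 < m n)%N by near: n; exact: m_oo.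
have n0 : (0 < n)%N by near: n; exact: nbhs_infty_gt.
have bound_le : `|0 - expR (c * 'C(m n, 2)%:R) / n%:R / eps ^+ 2| <= e.
  by near: n; exact: bound_small.
rewrite sub0r normrN ger0_norm; last first.
  by apply: iidProb_ge0 => G; exact: ergmP_ge0.
apply: le_trans (iidProb_ergm_dev_le _ _ eps0 m1 n0) _.
by rewrite invfM mulrA (le_trans (ler_norm _)) // -normrN -sub0r.
Unshelve. all: end_near.
Qed.
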